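(* Let $\Xi:\mathbf R^n\to\mathbf R^n$ be continuously differentiable with symmetric Jacobian $D\Xi(x)$ for every $x\in\mathbf R^n$, and let $\alpha\in(0,1)$. Then $\Xi$ is $\alpha$-averaged if and only if $\operatorname{spec}(D\Xi(x))\subset[1-2\alpha,1]$ for all $x\in\mathbf R^n$.
   Context: $\mathbf R^n$ carries the Euclidean norm $\|\cdot\|$. An operator $T$ is non-expansive if $\|T(x)-T(y)\|\le\|x-y\|$ for all $x,y$. For $\alpha\in(0,1)$, an operator $\Xi:\mathbf R^n\to\mathbf R^n$ is called $\alpha$-averaged if there exists a non-expansive $T:\mathbf R^n\to\mathbf R^n$ such that $\Xi=(1-\alpha)\mathrm{id}+\alpha T$. $\operatorname{spec}(M)$ denotes the set of eigenvalues of a matrix $M$. *)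

From HB Require Import structures.
From mathcomp Require Import all_boot all_order all_algebra.
From mathcomp Require Import all_classical all_reals all_analysis.
Set Implicit Arguments. Unset Strict Implicit. Unset Printing Implicit Defensive.
Import Order.TTheory GRing.Theory Num.Theory.
Import numFieldNormedType.Exports.
Local Open Scope ring_scope.

(* Euclidean norm on R^n (the library's default norm on 'rV is the max norm). *)
Definition eucl_norm (R : realType) (n : nat) (v : 'rV[R]_n) : R :=
  Num.sqrt (\sum_(i < n) v ord0 i ^+ 2).

Definition nonexpansive (R : realType) (n : nat) (T : 'rV[R]_n -> 'rV[R]_n) : Prop :=
  forall x y, eucl_norm (T x - T y) <= eucl_norm (x - y).

Definition averaged (R : realType) (n : nat) (alpha : R)
  (Xi : 'rV[R]_n -> 'rV[R]_n) : Prop :=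
  exists T : 'rV[R]_n -> 'rV[R]_n,
    nonexpansive T /\ forall x, Xi x = (1 - alpha) *: x + alpha *: T x.

Definition C1 (R : realType) (n : nat) (Xi : 'rV[R]_n -> 'rV[R]_n) : Prop :=
  (forall x, differentiable Xi x) /\ continuous (fun x => jacobian Xi x).

(* Xi = (1 - alpha) id + alpha T forces T = (Xi - (1 - alpha) id) / alpha, so Xi is
   alpha-averaged iff this T is non-expansive.  A differentiable map is non-expansive
   iff each of its Jacobians is a Euclidean contraction: one direction passes to the
   limit in difference quotients, the other applies the mean value theorem to
   t |-> <T x - T y, T (y + t (x - y))>.  The Jacobian of T is
   (D Xi - (1 - alpha) I) / alpha, a symmetric matrix, and a symmetric matrix is a
   contraction iff its spectrum lies in [-1, 1] (diagonalize its complexification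
   unitarily); for the Jacobian of T this is exactly spec (D Xi) in [1 - 2 alpha, 1]. *)

From HB Require Import structures.
From mathcomp Require Import all_boot all_order all_algebra.
From mathcomp Require Import all_classical all_reals all_analysis.
From mathcomp.real_closed Require Import complex.
From mathcomp Require Import ring lra.
Import Order.TTheory GRing.Theory Num.Theory.
Import numFieldNormedType.Exports.
Local Open Scope ring_scope.
Set Implicit Arguments. Unset Strict Implicit. Unset Printing Implicit Defensive.

Section SquaredNorm.
Variable R : realType.

Definition sqnorm n (v : 'rV[R]_n) : R := \sum_(i < n) v 0 i ^+ 2.

Lemma sqnorm_ge0 n (v : 'rV[R]_n) : 0 <= sqnorm v.
Proof. by apply: sumr_ge0 => i _; apply: sqr_ge0. Qed.

Lemma sqnorm_gt0 n (v : 'rV[R]_n) : v != 0 -> 0 < sqnorm v.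
Proof.
move=> /eqP v_neq0; have [i vi_neq0] : exists i, v 0 i != 0.
  apply/existsP; apply: contra_notT v_neq0 => /existsPn vi0.
  by apply/rowP => j; rewrite mxE; apply/eqP/negbNE.
rewrite /sqnorm (bigD1 i) //=; apply: ltr_pwDl; first by rewrite exprn_even_gt0.
by apply: sumr_ge0 => j _; apply: sqr_ge0.
Qed.

Lemma sqnormZ n k (v : 'rV[R]_n) : sqnorm (k *: v) = k ^+ 2 * sqnorm v.
Proof. by rewrite /sqnorm mulr_sumr; apply: eq_bigr => i _; rewrite mxE exprMn. Qed.

Lemma eucl_norm_le n (u v : 'rV[R]_n) :
  (eucl_norm u <= eucl_norm v) = (sqnorm u <= sqnorm v).
Proof. by rewrite /eucl_norm ler_sqrt // sqnorm_ge0. Qed.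

Lemma continuous_sqnorm n : continuous (@sqnorm n).
Proof.
have -> : @sqnorm n = \sum_(i < n) (fun v : 'rV[R]_n => v 0 i * v 0 i).
  by apply/funext => v; rewrite fct_sumE; apply: eq_bigr => i _; rewrite expr2.
elim/big_ind: _ => [|f g cf cg x|i _ x]; first exact: cst_continuous.
  by apply: continuousD; [exact: cf | exact: cg].
by apply: continuousM; apply: (@coord_continuous R 1 n 0 i).
Qed.

(* [|u - w|^2 = |u|^2 - |w|^2] when [<w, u> = |w|^2]. *)
Lemma sqnorm_le_of_dot n (u w : 'rV[R]_n) :
  \sum_i w 0 i * u 0 i = sqnorm w -> sqnorm w <= sqnorm u.
Proof.
move=> dot_wu.
have expand : sqnorm (u - w) = sqnorm u + sqnorm w - 2 * \sum_i w 0 i * u 0 i.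
  rewrite /sqnorm mulr_sumr -big_split -sumrB /=.
  by apply: eq_bigr => i _; rewrite !mxE; ring.
have := sqnorm_ge0 (u - w); rewrite expand dot_wu; lra.
Qed.

End SquaredNorm.

Section HermitianSpectral.
Variable C : numClosedFieldType.
Local Open Scope sesquilinear_scope.

Lemma dotmx_mulmx_unitary n (x : 'rV[C]_n) (P : 'M[C]_n) :
  P \is unitarymx -> dotmx (x *m P) (x *m P) = dotmx x x.
Proof.
move=> /unitarymxP P_unitary.
by rewrite !dotmxE trmx_mul map_mxM !mulmxA -(mulmxA x) P_unitary mulmx1.
Qed.

Lemma dotmx_mul_diag_le n (x d : 'rV[C]_n) :
  (forall i, `|d 0 i| <= 1) -> dotmx (x *m diag_mx d) (x *m diag_mx d) <= dotmx x x.
Proof.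
move=> d_le1; rewrite !dotmxE !mxE; apply: ler_sum => j _.
rewrite mul_mx_diag !mxE rmorphM -normCK.
rewrite [X in X <= _](_ : _ = `|d 0 j| ^+ 2 * `|x 0 j| ^+ 2); last first.
  by rewrite !normCK; ring.
by apply: ler_piMl; rewrite ?exprn_ge0 ?exprn_ile1.
Qed.

Lemma hermitian_spectral_decomposition n (A : 'M[C]_n) : A \is hermsymmx ->
  A = (spectralmx A)^t* *m diag_mx (spectral_diag A) *m spectralmx A.
Proof.
move=> A_herm; rewrite -invmx_unitary ?spectral_unitarymx //.
exact/orthomx_spectralP/hermitian_normalmx.
Qed.

Lemma eigenvalue_spectral_diag n (A : 'M[C]_n) i : A \is hermsymmx ->
  eigenvalue A (spectral_diag A 0 i).
Proof.
move=> A_herm; set P := spectralmx A; have /unitarymxP P_unitary := spectral_unitarymx A.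
apply/eigenvalueP; exists (row i P).
  rewrite {1}(hermitian_spectral_decomposition A_herm) !mulmxA -!row_mul P_unitary.
  by rewrite mul1mx row_mul row_diag_mx -scalemxAl -rowE.
apply/eqP => /(congr1 (fun v => v *m P^t*)); rewrite -row_mul P_unitary mul0mx.
by move/rowP/(_ i); rewrite !mxE eqxx => /eqP; rewrite oner_eq0.
Qed.

End HermitianSpectral.

Section SymmetricContraction.
Variable R : realType.
Local Open Scope sesquilinear_scope.
Local Notation toC := (real_complex R).

Lemma dotmx_map_real n (w : 'rV[R]_n) :
  dotmx (map_mx toC w) (map_mx toC w) = toC (sqnorm w).
Proof.
rewrite dotmxE mxE rmorph_sum; apply: eq_bigr => j _.
rewrite !mxE conj_Creal; last by apply/complex_realP; eexists.
by rewrite rmorphXn expr2.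
Qed.

Lemma map_real_symmetric_hermsym n (M : 'M[R]_n) : M^T = M ->
  map_mx toC M \is hermsymmx.
Proof.
move=> M_sym; apply: realsym_hermsym.
  by apply/is_hermitianmxP; rewrite expr0 scale1r map_mx_id // map_trmx M_sym.
by apply/mxOverP => k l; rewrite mxE; apply/complex_realP; eexists.
Qed.

Lemma spectral_diag_real_eigenvalue n (M : 'M[R]_n) i : M^T = M ->
  exists2 r, spectral_diag (map_mx toC M) 0 i = toC r & eigenvalue M r.
Proof.
move=> /map_real_symmetric_hermsym B_herm.
have /complex_realP [r di] := mxOverP (hermitian_spectral_diag_real B_herm) 0 i.
exists r => //.
by have := eigenvalue_spectral_diag i B_herm; rewrite di eigenvalue_map.
Qed.

Lemma sqnorm_mulmx_le_of_spectrum n (M : 'M[R]_n) : M^T = M ->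
  (forall b, eigenvalue M b -> -1 <= b <= 1) ->
  forall v, sqnorm (v *m M) <= sqnorm v.
Proof.
move=> M_sym M_spec v.
have B_herm := map_real_symmetric_hermsym M_sym.
set B := map_mx toC M in B_herm; set P := spectralmx B; set d := spectral_diag B.
have d_le1 i : `|d 0 i| <= 1.
  have [r -> /M_spec r_bound] := spectral_diag_real_eigenvalue i M_sym.
  rewrite real_ler_norml; last by apply/complex_realP; eexists.
  by rewrite -(rmorph1 toC) -rmorphN !lecR.
have P_unitary := spectral_unitarymx B.
pose x := map_mx toC v *m P^t*.
have vE : map_mx toC v = x *m P by rewrite -mulmxA mulmx1C ?mulmx1 //; apply/unitarymxP.
have vME : map_mx toC (v *m M) = x *m diag_mx d *m P.
  rewrite map_mxM -/B {1}(hermitian_spectral_decomposition B_herm) -/P -/d vE.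
  by rewrite !mulmxA -(mulmxA x) (unitarymxP P_unitary) mulmx1.
rewrite -lecR -!dotmx_map_real vME vE !(dotmx_mulmx_unitary _ P_unitary).
exact: dotmx_mul_diag_le.
Qed.

Lemma sqnorm_mulmx_le_iff_spectrum n (M : 'M[R]_n) : M^T = M ->
  (forall v, sqnorm (v *m M) <= sqnorm v) <->
  (forall b, eigenvalue M b -> -1 <= b <= 1).
Proof.
move=> M_sym; split; last exact: sqnorm_mulmx_le_of_spectrum.
move=> M_contr b /eigenvalueP [v vM v_neq0].
have := M_contr v; rewrite vM sqnormZ -[X in _ <= X]mul1r ler_pM2r ?sqnorm_gt0 //.
by move=> b2_le1; apply/andP; split; nra.
Qed.

End SymmetricContraction.

Section NonexpansiveDerivative.
Variable R : realType.
Local Open Scope classical_set_scope.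

Lemma sqnorm_derive_le n (T : 'rV[R]_n -> 'rV[R]_n) z v :
  nonexpansive T -> derivable T z v -> sqnorm ('D_v T z) <= sqnorm v.
Proof.
move=> T_nonexp /(continuous_cvg _ (@continuous_sqnorm R n _)) T_cvg.
apply: (cvgr_to_le T_cvg); near=> h.
have h_neq0 : h != 0 by near: h; exact: nbhs_dnbhs_neq.
have := T_nonexp (h *: v + z) z; rewrite eucl_norm_le addrK /= !sqnormZ.
by rewrite exprVn ler_pdivrMl // exprn_even_gt0.
Unshelve. all: by end_near.
Qed.

Lemma is_derive_along_line n (T : 'rV[R]_n -> 'rV[R]_n) (y d : 'rV[R]_n) t :
  derivable T (t *: d + y) d ->
  is_derive t 1 (fun s => T (s *: d + y)) ('D_d T (t *: d + y)).
Proof.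
have quotE : (fun h : R => h^-1 *: (T ((h *: 1 + t) *: d + y) - T (t *: d + y)))
    = (fun h : R => h^-1 *: (T (h *: d + (t *: d + y)) - T (t *: d + y))).
  by apply/funext => h; rewrite scalerDl -[h *: 1]/(h * 1) mulr1 addrA.
by move=> dT; apply: DeriveDef; rewrite /derivable /derive /= quotE.
Qed.

Lemma is_derive_mx_coord (V : normedModType R) m k (M : V -> 'M[R]_(m, k))
    t v (dM : 'M[R]_(m, k)) i j :
  is_derive t v M dM -> is_derive t v (fun s => M s i j) (dM i j).
Proof.
move=> M'; have M_derivable : derivable M t v by apply: ex_derive.
apply: DeriveDef; first exact: (derivable_mxP M t v).1.
by rewrite -[dM]derive_val derive_mx // mxE.
Qed.

Lemma nonexpansive_of_jacobian_bound n (T : 'rV[R]_n -> 'rV[R]_n) :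
  (forall z, differentiable T z) ->
  (forall z v, sqnorm (v *m jacobian T z) <= sqnorm v) -> nonexpansive T.
Proof.
move=> dT T'_bound x y; rewrite eucl_norm_le.
set d := x - y; set w := T x - T y.
pose g := \sum_(i < n) (w 0 i *: (fun s => T (s *: d + y) 0 i)).
have g' (t : R) : is_derive t 1 g (\sum_i w 0 i * 'D_d T (t *: d + y) 0 i).
  apply: is_derive_sum => i; apply: is_deriveZ; apply: is_derive_mx_coord.
  exact/is_derive_along_line/diff_derivable.
have g_cont : {within `[0, 1], continuous g}.
  by apply: derivable_within_continuous => t _; exact: ex_derive.
have [c _ mvt] := MVT ltr01 (fun t _ => g' t) g_cont.
rewrite /g !fct_sumE subr0 mulr1 -sumrB in mvt.
apply: le_trans (T'_bound (c *: d + y) d); apply: sqnorm_le_of_dot.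
rewrite -deriveEjacobian // -mvt; apply: eq_bigr => i _.
by rewrite !scalrfctE scale1r scale0r add0r subrK -scalerBr [in RHS]/w !mxE expr2.
Qed.

Lemma nonexpansive_iff_jacobian_bound n (T : 'rV[R]_n -> 'rV[R]_n) :
  (forall z, differentiable T z) ->
  nonexpansive T <-> forall z v, sqnorm (v *m jacobian T z) <= sqnorm v.
Proof.
move=> dT; split; last exact: nonexpansive_of_jacobian_bound.
move=> T_nonexp z v; rewrite -deriveEjacobian //.
exact/sqnorm_derive_le/diff_derivable.
Qed.

End NonexpansiveDerivative.

Lemma eigenvalue_scale_shift (F : fieldType) n (A : 'M[F]_n) (a b c : F) :
  a != 0 -> eigenvalue (a^-1 *: (A - b%:M)) c = eigenvalue A (a * c + b).
Proof.
move=> a_neq0.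
have mulE (v : 'rV[F]_n) : v *m (a^-1 *: (A - b%:M)) = a^-1 *: (v *m A - b *: v).
  by rewrite -scalemxAr mulmxBr mul_mx_scalar.
apply/eigenvalueP/eigenvalueP => -[v vA v_neq0]; exists v => //.
  move: vA; rewrite mulE => /(congr1 (fun u => a *: u)).
  by rewrite !scalerA mulfV // scale1r => /eqP; rewrite subr_eq scalerDl => /eqP.
by rewrite mulE vA -scalerBl addrK scalerA mulKf.
Qed.

Section Unaverage.
Variable R : realType.

Definition unaverage n (alpha : R) (Xi : 'rV[R]_n -> 'rV[R]_n) (x : 'rV[R]_n) :=
  alpha^-1 *: (Xi x - (1 - alpha) *: x).

Lemma unaverageE n (alpha : R) (Xi : 'rV[R]_n -> 'rV[R]_n) :
  unaverage alpha Xi = alpha^-1 *: (Xi - (1 - alpha) *: idfun).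
Proof. by []. Qed.

Lemma averagedE n (alpha : R) (Xi : 'rV[R]_n -> 'rV[R]_n) : alpha != 0 ->
  averaged alpha Xi <-> nonexpansive (unaverage alpha Xi).
Proof.
move=> alpha_neq0; split=> [[T [T_nonexp XiE]]|unavg_nonexp].
  suff -> : unaverage alpha Xi = T by [].
  apply/funext => x; rewrite /unaverage XiE [_ + alpha *: _]addrC addrK.
  by rewrite scalerA mulVf ?scale1r.
exists (unaverage alpha Xi); split => // x.
by rewrite /unaverage scalerA mulfV // scale1r addrC subrK.
Qed.

Lemma is_derive_unaverage n (alpha : R) (Xi : 'rV[R]_n -> 'rV[R]_n) z v :
  differentiable Xi z ->
  is_derive z v (unaverage alpha Xi) (v *m (alpha^-1 *: (jacobian Xi z - (1 - alpha)%:M))).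
Proof.
move=> dXi; have Xi' : is_derive z v Xi (v *m jacobian Xi z).
  by rewrite -deriveEjacobian //; apply: derivableP; exact: diff_derivable.
by rewrite unaverageE -scalemxAr mulmxBr mul_mx_scalar; exact: is_deriveZ.
Qed.

Lemma differentiable_unaverage n (alpha : R) (Xi : 'rV[R]_n -> 'rV[R]_n) z :
  differentiable Xi z -> differentiable (unaverage alpha Xi) z.
Proof.
by move=> dXi; rewrite unaverageE; exact/differentiableZ/differentiableB.
Qed.

Lemma jacobian_unaverage n (alpha : R) (Xi : 'rV[R]_n -> 'rV[R]_n) z :
  differentiable Xi z ->
  jacobian (unaverage alpha Xi) z = alpha^-1 *: (jacobian Xi z - (1 - alpha)%:M).
Proof.
move=> dXi; apply/eqP/mulmxP => v.
rewrite -deriveEjacobian; last exact: differentiable_unaverage.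
by apply: derive_val; exact: is_derive_unaverage.
Qed.

Lemma spectrum_unaverage n (J : 'M[R]_n) (alpha : R) : 0 < alpha ->
  (forall b, eigenvalue (alpha^-1 *: (J - (1 - alpha)%:M)) b -> -1 <= b <= 1) <->
  (forall a, eigenvalue J a -> 1 - 2 * alpha <= a <= 1).
Proof.
move=> alpha_gt0; have alpha_neq0 := lt0r_neq0 alpha_gt0.
split=> [spec_unavg a|spec_J b].
  have [b ->] : exists b, a = alpha * b + (1 - alpha).
    by exists (alpha^-1 * (a - (1 - alpha))); rewrite mulVKf ?subrK.
  rewrite -eigenvalue_scale_shift // => /spec_unavg /andP[lo hi].
  by apply/andP; split; nra.
rewrite eigenvalue_scale_shift // => /spec_J /andP[lo hi].
by apply/andP; split; nra.
Qed.

End Unaverage.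

Theorem mainTheorem2 (R : realType) (n : nat) (Xi : 'rV[R]_n -> 'rV[R]_n)
  (alpha : R) :
  C1 Xi ->
  (forall x, (jacobian Xi x)^T = jacobian Xi x) ->
  0 < alpha < 1 ->
  averaged alpha Xi <->
  (forall x (a : R), eigenvalue (jacobian Xi x) a -> 1 - 2 * alpha <= a <= 1).
Proof.
move=> [dXi _] J_sym /andP[alpha_gt0 _].
have dunavg z := differentiable_unaverage alpha (dXi z).
have pointwise z : (forall v, sqnorm (v *m jacobian (unaverage alpha Xi) z) <= sqnorm v)
    <-> (forall a, eigenvalue (jacobian Xi z) a -> 1 - 2 * alpha <= a <= 1).
  rewrite jacobian_unaverage; last exact: dXi.
  apply: iff_trans (spectrum_unaverage _ alpha_gt0).
  by apply: sqnorm_mulmx_le_iff_spectrum; rewrite linearZ linearB /= tr_scalar_mx J_sym.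
apply: iff_trans (averagedE Xi (lt0r_neq0 alpha_gt0)) _.
apply: iff_trans (nonexpansive_iff_jacobian_bound dunavg) _.
by split=> bound z; apply/(pointwise z); apply: bound.
Qed.
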